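(* Let $t$ be a join node of a rooted nice tree decomposition of the Tanner graph $G$ with children $t_1,t_2$ ($B_t=B_{t_1}=B_{t_2}$). For $R\subseteq B_t^c$, $Q\subseteq B_t^v$ let $$F_t(R,Q)=\min\{f_{t_1}(R_1,Q)+f_{t_2}(R_2,Q)-|Q|\},\qquad G_t(R,Q)=\sum g_{t_1}(R_1,Q)\,g_{t_2}(R_2,Q),$$ where the minimum is over all pairs $(R_1,R_2)$ of subsets of $B_t^c$ with $R=R_1\oplus R_2\oplus\Gamma_o(G_t[Q\cup B_t^c])$, and the sum is over those pairs attaining the minimum. Then for all $R\subseteq B_t^c$, $Q\subseteq B_t^v$: if $Q\neq\emptyset$, $f_t(R,Q)=F_t(R,Q)$ and $g_t(R,Q)=G_t(R,Q)$; if $Q=\emptyset$, $f_t(R,Q)=\min\{F_t(R,Q),f_{t_1}(R,Q),f_{t_2}(R,Q)\}$ and $$g_t(R,Q)=\mathbb 1_{f_t(R,Q)=F_t(R,Q)}G_t(R,Q)+\mathbb 1_{f_t(R,Q)=f_{t_1}(R,Q)}g_{t_1}(R,Q)+\mathbb 1_{f_t(R,Q)=f_{t_2}(R,Q)}g_{t_2}(R,Q),$$ where $\mathbb 1_{x=y}$ is $1$ if $x=y$ and $0$ otherwise (whenever the minimum value is finite).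
   Context: $G=(\mathcal L\cup\mathcal R,E)$ is a Tanner graph (bipartite, variable nodes $\mathcal L$, check nodes $\mathcal R$). For a subgraph $H$ of $G$ and $S\subseteq\mathcal L$ in $H$, $H[S]$ is the subgraph of $H$ induced by $S$ together with its neighbours in $H$; for $L\subseteq\mathcal L$, $R\subseteq\mathcal R$, $H[L\cup R]$ is the subgraph of $H$ induced on the vertex set $L\cup R$. $\Gamma_o(\cdot)$ is the set of odd-degree check nodes in the indicated subgraph; $\oplus$ is symmetric difference. A trapping set is a nonempty subset of $\mathcal L$. A rooted nice tree decomposition $(T,(B_t))$ is a rooted tree decomposition (every vertex and edge lies in some bag; bags containing a given vertex form a connected subtree) where every node has at most two children, root and leaves have empty bags, a node with two children (join node) has the same bag as each child, and a node $t$ with one child $t'$ has $B_t=B_{t'}\cup\{v\}$ or $B_t=B_{t'}\setminus\{v\}$. For a node $t$: $B_t^c=B_t\cap\mathcal R$, $B_t^v=B_t\cap\mathcal L$; $G_t$ is the subgraph of $G$ induced on the union of the bags of all descendants of $t$ (including $t$); $\mathcal L(G_t)$ is its set of variable nodes. A trapping set $S$ has parameters $(R,Q)$ in $G_t$ ($R\subseteq B_t^c$, $Q\subseteq B_t^v$) if $S\subseteq\mathcal L(G_t)$, $S\cap B_t^v=Q$, and $\Gamma_o(G_t[S])=R$. $f_t(R,Q)$ is the minimum size of a trapping set with parameters $(R,Q)$ in $G_t$ ($+\infty$ if none exists), and $g_t(R,Q)$ is the number of trapping sets with parameters $(R,Q)$ in $G_t$ of size $f_t(R,Q)$ ($0$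 if none exists). *)

From mathcomp Require Import all_boot.
Set Implicit Arguments. Unset Strict Implicit. Unset Printing Implicit Defensive.

(* Extended naturals: None = +infinity. *)
Definition omin (a b : option nat) : option nat :=
  match a, b with
  | None, _ => b
  | _, None => a
  | Some x, Some y => Some (minn x y)
  end.
Definition oadd (a b : option nat) : option nat :=
  match a, b with
  | Some x, Some y => Some (x + y)
  | _, _ => None
  end.

Definition symd (T : finType) (A B : {set T}) : {set T} := (A :\: B) :|: (B :\: A).

(* Tanner graph: vertex type V, variable nodes = isvar, check nodes = ~~ isvar,
   symmetric edge relation e, every edge joins a variable node and a check node. *)
Definition tanner_graph (V : finType) (isvar : pred V) (e : rel V) : Prop :=
  symmetric e /\ (forall x y, e x y -> isvar x != isvar y).

Definition rooted_tree (N : finType) (par : N -> N) (root : N) : Prop :=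
  par root = root /\ (forall u, fconnect par u root).

Definition children (N : finType) (par : N -> N) (root t : N) : {set N} :=
  [set u | (u != root) && (par u == t)].

Definition tree_adj (N : finType) (par : N -> N) (root : N) : rel N :=
  fun u w => ((u != root) && (par u == w)) || ((w != root) && (par w == u)).

Definition tree_decomposition (V N : finType) (e : rel V) (par : N -> N) (root : N)
  (B : N -> {set V}) : Prop :=
  [/\ forall v, exists u, v \in B u,
      forall x y, e x y -> exists u, (x \in B u) /\ (y \in B u) &
      forall v x y, v \in B x -> v \in B y ->
        connect [rel a b | [&& tree_adj par root a b, v \in B a & v \in B b]] x y].

Definition nice_tree_decomposition (V N : finType) (e : rel V) (par : N -> N)
  (root : N) (B : N -> {set V}) : Prop :=
  [/\ rooted_tree par root,
      tree_decomposition e par root B,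
      forall t, #|children par root t| <= 2,
      B root = set0 /\ (forall t, children par root t = set0 -> B t = set0) &
      (forall t, #|children par root t| = 2 ->
         forall c, c \in children par root t -> B t = B c) /\
      (forall t c, children par root t = [set c] ->
         exists v, B t = B c :|: [set v] \/ B t = B c :\ v)].

Section DP.
Variables (V N : finType) (isvar : pred V) (e : rel V)
  (par : N -> N) (B : N -> {set V}).

(* vertex set of G_t: union of bags of descendants of t (including t) *)
Definition Vt (t : N) : {set V} := \bigcup_(u | fconnect par u t) B u.
Definition Lt (t : N) : {set V} := [set x in Vt t | isvar x].
Definition Bc (t : N) : {set V} := [set x in B t | ~~ isvar x].
Definition Bv (t : N) : {set V} := [set x in B t | isvar x].

(* Gamma_o(G_t[S]) for S a set of variable nodes of G_t: the check nodes of G_t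
   having an odd number of neighbours in S. *)
Definition gamma_o (t : N) (S : {set V}) : {set V} :=
  [set c in Vt t | ~~ isvar c & odd #|[set s in S | e s c]|].

(* Gamma_o(G_t[Q \cup B_t^c]) for Q a set of variable nodes of B_t. *)
Definition gammaQ (t : N) (Q : {set V}) : {set V} :=
  [set c in Bc t | odd #|[set s in Q | e s c]|].

Definition ts_param (t : N) (R Q S : {set V}) : bool :=
  [&& S != set0, S \subset Lt t, S :&: Bv t == Q & gamma_o t S == R].

Definition f (t : N) (R Q : {set V}) : option nat :=
  \big[omin/None]_(S : {set V} | ts_param t R Q S) Some #|S|.

Definition g (t : N) (R Q : {set V}) : nat :=
  #|[set S : {set V} | ts_param t R Q S & Some #|S| == f t R Q]|.

Definition join_pair (t : N) (R Q R1 R2 : {set V}) : bool :=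
  [&& R1 \subset Bc t, R2 \subset Bc t & R == symd (symd R1 R2) (gammaQ t Q)].

Definition join_val (t1 t2 : N) (Q R1 R2 : {set V}) : option nat :=
  omap (fun x => x - #|Q|) (oadd (f t1 R1 Q) (f t2 R2 Q)).

Definition Fjoin (t t1 t2 : N) (R Q : {set V}) : option nat :=
  \big[omin/None]_(p : {set V} * {set V} | join_pair t R Q p.1 p.2)
     join_val t1 t2 Q p.1 p.2.

Definition Gjoin (t t1 t2 : N) (R Q : {set V}) : nat :=
  \sum_(p : {set V} * {set V} |
          join_pair t R Q p.1 p.2 && (join_val t1 t2 Q p.1 p.2 == Fjoin t t1 t2 R Q))
     g t1 p.1 Q * g t2 p.2 Q.

End DP.

From HB Require Import structures.
From Pilot Require Import Defs.
From mathcomp Require Import all_boot zify.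
Set Implicit Arguments. Unset Strict Implicit. Unset Printing Implicit Defensive.

(* A trapping set S of G_t with bag part Q splits into S1 = S ∩ L(G_t1) and
   S2 = S ∩ L(G_t2), which meet exactly in Q because the bag B_t separates the
   two subtrees.  A check node of the bag sees both parts and counts its
   neighbours in Q twice, while a check node outside the bag lies in a single
   subtree together with all its variable neighbours; hence
   Γ_o(S) = Γ_o(S1) ⊕ Γ_o(S2) ⊕ Γ_o(G_t[Q ∪ B_t^c]) and |S| = |S1| + |S2| - |Q|.
   Conversely trapping sets of the two children with the same Q glue together,
   so S ↦ (S1, S2) is a bijection between minimum trapping sets of G_t meeting
   both subtrees and pairs of minimum trapping sets of the children whose odd
   sets realise the minimum in F_t.  When Q = ∅ one part may be empty, and S is
   then a trapping set of a single child. *)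

Definition ole (a b : option nat) : bool :=
  match a, b with
  | _, None => true
  | None, Some _ => false
  | Some x, Some y => x <= y
  end.

Lemma ole_None a : ole a None. Proof. by case: a. Qed.
Lemma ole_trans a b c : ole a b -> ole b c -> ole a c.
Proof. by case: a; case: b; case: c => //= *; lia. Qed.
Lemma ole_anti a b : ole a b -> ole b a -> a = b.
Proof. by case: a; case: b => //= x y h1 h2; congr Some; lia. Qed.
Lemma ole_ominl a b : ole (omin a b) a.
Proof. by case: a; case: b => //= *; lia. Qed.
Lemma ole_ominr a b : ole (omin a b) b.
Proof. by case: a; case: b => //= *; lia. Qed.
Lemma ole_omin a b c : ole c a -> ole c b -> ole c (omin a b).
Proof. by case: a; case: b; case: c => //= *; lia. Qed.

Lemma ominA : associative omin.
Proof. by case=> [x|] [y|] [z|] //=; rewrite minnA. Qed.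
Lemma ominC : commutative omin.
Proof. by case=> [x|] [y|] //=; rewrite minnC. Qed.
Lemma omin0o : left_id None omin.
Proof. by case. Qed.
HB.instance Definition _ := Monoid.isComLaw.Build (option nat) None omin ominA ominC omin0o.

Section BigOmin.
Variables (I : finType) (P : pred I) (h : I -> option nat).

Lemma big_omin_le i : P i -> ole (\big[omin/None]_(j | P j) h j) (h i).
Proof. by move=> Pi; rewrite (bigD1 i) //=; apply: ole_ominl. Qed.

Lemma big_omin_attained :
  \big[omin/None]_(j | P j) h j = None \/
  exists2 i, P i & h i = \big[omin/None]_(j | P j) h j.
Proof.
apply: (big_ind (fun x => x = None \/ exists2 i, P i & h i = x)); [by left | | by right; exists i].
move=> x y [-> | [i Pi <-]] [-> | [j Pj <-]]; rewrite ?omin0o; [by left | by right; exists j | | ].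
  by right; exists i; case: (h i).
right; case Ei: (h i) => [a|]; case Ej: (h j) => [b|] /=; try by [exists i | exists j].
by case: (leqP a b) => hab; [exists i | exists j]; rewrite // ?Ei ?Ej; congr Some; lia.
Qed.

End BigOmin.

Section RootedTree.
Variables (N : finType) (par : N -> N) (root : N).
Hypothesis par_root : par root = root.

Lemma fconnect_par x y : fconnect par x y -> x != y -> fconnect par (par x) y.
Proof.
move=> /iter_findex; case: (findex par x y) => [<-|n]; first by rewrite eqxx.
by rewrite iterSr => <- _; apply: fconnect_iter.
Qed.

Lemma fconnect_child u t : fconnect par u t -> u != t ->
  exists a, [/\ par a = t, a != root & fconnect par u a].
Proof.
move=> /iter_findex; move: (findex par u t) => n.
elim: n u => [|n IH] u; first by move=> /= ->; rewrite eqxx.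
rewrite iterSr => hn ut; case: (eqVneq (par u) t) => [pu | put].
  by exists u; split=> //; apply: contra_neq ut => ur; rewrite -pu ur par_root.
have [a [pa ar ua]] := IH _ hn put.
by exists a; split=> //; apply: connect_trans (fconnect1 _ _) ua.
Qed.

Hypothesis reach_root : forall u, fconnect par u root.

Lemma iter_cycle_root x k : 0 < k -> iter k par x = x -> x = root.
Proof.
move=> k_gt0 xk; have /iter_findex := reach_root x; set j := findex par x root => xj.
have iter_mul m : iter (k * m) par x = x.
  by elim: m => [|m IH]; rewrite ?muln0 // mulnS iterD IH.
have j_le : j <= k * j by rewrite leq_pmull.
by rewrite -(iter_mul j) -(subnK j_le) iterD xj iter_fix.
Qed.

Lemma siblings_no_common_descendant w a b :
  par a = par b -> a != b -> a != root -> b != root ->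
  fconnect par w a -> fconnect par w b -> False.
Proof.
move=> pab ab ar br wa wb.
wlog mn : a b pab ab ar br wa wb / findex par w a <= findex par w b.
  move=> H; case: (leqP (findex par w a) (findex par w b)) => [|/ltnW]; first exact: H.
  by move=> ba; apply: (H b a); rewrite // eq_sym.
have ab_iter : iter (findex par w b - findex par w a) par a = b.
  move: (iter_findex wa) (iter_findex wb) mn.
  by move: (findex par w a) (findex par w b) => m n <- <- mn; rewrite -iterD subnK.
move: ab_iter; case: (_ - _) => [/= ba | k]; first by rewrite ba eqxx in ab.
rewrite iterSr pab -iterSr => /(iter_cycle_root (ltn0Sn k)) broot.
by rewrite broot eqxx in br.
Qed.

End RootedTree.

Section Subtrees.
Variables (V N : finType) (e : rel V) (par : N -> N) (root : N) (B : N -> {set V}).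

Lemma bag_sub_Vt c : B c \subset Vt par B c.
Proof. by apply/subsetP => v vc; apply/bigcupP; exists c; first exact: connect0. Qed.

Definition closed_off_bag (t c : N) : Prop :=
  forall x s, x \in Vt par B c -> x \notin B t -> e s x -> s \in Vt par B c.

Record subtree_join (t u w : N) : Prop := SubtreeJoin {
  join_bag_l : B t = B u;
  join_bag_r : B t = B w;
  join_Vt : Vt par B t = Vt par B u :|: Vt par B w;
  join_Vt_meet : Vt par B u :&: Vt par B w = B t;
  join_closed_l : closed_off_bag t u;
  join_closed_r : closed_off_bag t w }.

Lemma subtree_join_sym t u w : subtree_join t u w -> subtree_join t w u.
Proof. by case=> *; split; rewrite // 1?setUC 1?setIC. Qed.

Hypothesis tdec : tree_decomposition e par root B.

Lemma bag_separator u w c v : fconnect par u c -> ~~ fconnect par w c ->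
  v \in B u -> v \in B w -> v \in B c.
Proof.
case: tdec => _ _ bags_connected uc wc vu vw.
case/connectP: (bags_connected v u w vu vw) => p.
elim: p u uc vu => [|y p IH] u uc vu /=; first by move=> _ wu; rewrite wu uc in wc.
case/andP => /and3P [adj _ vy] yp wl.
have [yc | yc] := boolP (fconnect par y c); first exact: (IH y yc vy yp wl).
case/orP: adj => /andP [_ /eqP pu].
- case: (eqVneq u c) => [<- // | uc_ne].
  by rewrite -pu (fconnect_par uc uc_ne) in yc.
- by rewrite (connect_trans (fconnect1 par y)) ?pu in yc.
Qed.

Lemma Vt_closed_off_bag t c : B t = B c -> closed_off_bag t c.
Proof.
move=> Btc x s /bigcupP [w wc xw] xt esx; case: tdec => _ edge_in_bag _.
have [u [su xu]] := edge_in_bag _ _ esx.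
have [uc | uc] := boolP (fconnect par u c); first by apply/bigcupP; exists u.
by rewrite Btc (bag_separator wc uc xw xu) in xt.
Qed.

Variables (t t1 t2 : N).
Hypothesis par_root : par root = root.
Hypothesis reach_root : forall u, fconnect par u root.
Hypothesis t_children : children par root t = [set t1; t2].
Hypothesis t1_ne_t2 : t1 != t2.
Hypotheses (Bt1 : B t = B t1) (Bt2 : B t = B t2).

Lemma join_node_child c : c \in [set t1; t2] -> par c = t /\ c != root.
Proof. by rewrite -t_children inE => /andP [-> /eqP]. Qed.

Lemma join_node_Vt : Vt par B t = Vt par B t1 :|: Vt par B t2.
Proof.
have [[p1 _] [p2 _]] := (join_node_child (set21 t1 t2), join_node_child (set22 t1 t2)).
apply/setP => v; apply/bigcupP/setUP => [[u ut vu] | ].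
  case: (eqVneq u t) => [ut_eq | ut_ne].
    by left; apply/bigcupP; exists t1; [exact: connect0 | rewrite -Bt1 -ut_eq].
  have [a [pa ar ua]] := fconnect_child par_root ut ut_ne.
  have : a \in children par root t by rewrite inE ar pa eqxx.
  rewrite t_children !inE => /orP [] /eqP ea; [left | right];
    by apply/bigcupP; exists u; rewrite -?ea.
by case=> /bigcupP [u uc vu]; exists u => //; apply: connect_trans uc _;
  [rewrite -p1 | rewrite -p2]; exact: fconnect1.
Qed.

Lemma join_node_Vt_meet : Vt par B t1 :&: Vt par B t2 = B t.
Proof.
have [[p1 r1] [p2 r2]] := (join_node_child (set21 t1 t2), join_node_child (set22 t1 t2)).
apply/eqP; rewrite eqEsubset subsetI {2}Bt1 {2}Bt2 !bag_sub_Vt /= andbT.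
apply/subsetP => v /setIP [/bigcupP [u u1 vu] /bigcupP [w w2 vw]].
rewrite Bt1; apply: (bag_separator u1 _ vu vw); apply/negP => w1.
by apply: (siblings_no_common_descendant par_root reach_root _ t1_ne_t2 r1 r2 w1 w2); rewrite p1 p2.
Qed.

Lemma join_node_subtree_join : subtree_join t t1 t2.
Proof.
split; rewrite ?join_node_Vt ?join_node_Vt_meet //; exact: Vt_closed_off_bag.
Qed.

End Subtrees.

Lemma in_symd (T : finType) (A C : {set T}) x : (x \in symd A C) = (x \in A) (+) (x \in C).
Proof. by rewrite !inE; case: (x \in A); case: (x \in C). Qed.

Lemma symd0 (T : finType) (A : {set T}) : symd A set0 = A.
Proof. by apply/setP => x; rewrite in_symd inE addbF. Qed.

Lemma odd_card_setIdU (T : finType) (A C : {set T}) (p : pred T) :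
  odd #|[set x in A :|: C | p x]| =
  odd #|[set x in A | p x]| (+) odd #|[set x in C | p x]| (+) odd #|[set x in A :&: C | p x]|.
Proof.
have -> : [set x in A :|: C | p x] = [set x in A | p x] :|: [set x in C | p x].
  by apply/setP => x; rewrite !inE andb_orl.
have -> : [set x in A :&: C | p x] = [set x in A | p x] :&: [set x in C | p x].
  by apply/setP => x; rewrite !inE andbACA andbb.
move/(congr1 odd): (cardsUI [set x in A | p x] [set x in C | p x]).
by rewrite !oddD => <-; rewrite -addbA addbb addbF.
Qed.

Lemma sum_nat_of_bool (T : finType) (P : pred T) : \sum_(x : T) (P x : nat) = #|[set x | P x]|.
Proof. by rewrite -sum1dep_card [RHS]big_mkcond. Qed.

Section TrappingSets.
Variables (V N : finType) (isvar : pred V) (e : rel V) (par : N -> N) (B : N -> {set V}).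

Local Notation Vt := (Vt par B).
Local Notation Lt := (Lt isvar par B).
Local Notation Bv := (Bv isvar B).
Local Notation Bc := (Bc isvar B).
Local Notation gamma_o := (gamma_o isvar e par B).
Local Notation gammaQ := (gammaQ isvar e B).
Local Notation ts_param := (ts_param isvar e par B).
Local Notation f := (f isvar e par B).
Local Notation g := (g isvar e par B).

Lemma gamma_o_set0 t : gamma_o t set0 = set0.
Proof. by apply/setP => c; rewrite !inE setIdE set0I cards0 !andbF. Qed.

Lemma gammaQ_set0 t : gammaQ t set0 = set0.
Proof. by apply/setP => c; rewrite !inE setIdE set0I cards0 !andbF. Qed.

Lemma ts_param_sub u (R Q S : {set V}) : ts_param u R Q S -> Q \subset S.
Proof. by case/and4P => _ _ /eqP <- _; apply: subsetIl. Qed.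

Lemma f_le_card u (R Q S : {set V}) : ts_param u R Q S -> ole (f u R Q) (Some #|S|).
Proof. exact: (big_omin_le (fun S : {set V} => Some #|S|)). Qed.

Lemma f_attained u (R Q : {set V}) :
  f u R Q = None \/ exists2 S, ts_param u R Q S & Some #|S| = f u R Q.
Proof. exact: big_omin_attained. Qed.

Lemma f_witness u (R Q : {set V}) n : f u R Q = Some n -> exists2 S, ts_param u R Q S & #|S| = n.
Proof. by move=> fn; case: (f_attained u R Q) => [| [S T]]; rewrite fn // => -[]; exists S. Qed.

Lemma f_ge_cardQ u (R Q : {set V}) n : f u R Q = Some n -> #|Q| <= n.
Proof. by case/f_witness => S /ts_param_sub/subset_leq_card QS <-. Qed.

Lemma card_ts_param_le u (R Q : {set V}) (k : option nat) : ole k (f u R Q) ->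
  #|[set S | ts_param u R Q S & Some #|S| == k]| = (k == f u R Q) * g u R Q.
Proof.
move=> k_le; case: (eqVneq k (f u R Q)) => [-> | k_ne]; first by rewrite mul1n.
rewrite mul0n; apply/eqP; rewrite cards_eq0; apply/eqP/setP => S; rewrite !inE.
apply/negbTE/andP => -[T /eqP Sk]; move: k_ne; rewrite -Sk in k_le *.
by rewrite (ole_anti k_le (f_le_card T)) eqxx.
Qed.

Section JoinChild.
Variables (t u w : N).
Hypothesis tuw : subtree_join e par B t u w.

Lemma Lt_join : Lt t = Lt u :|: Lt w.
Proof. by apply/setP => x; rewrite !inE (join_Vt tuw) inE andb_orl. Qed.

Lemma Lt_meet : Lt u :&: Lt w = Bv t.
Proof. by apply/setP => x; rewrite !inE -(join_Vt_meet tuw) !inE andbACA andbb. Qed.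

Lemma Lt_child_sub : Lt u \subset Lt t.
Proof. by rewrite Lt_join subsetUl. Qed.

Lemma Bv_sub_Lt : Bv t \subset Lt u.
Proof. by rewrite -Lt_meet subsetIl. Qed.

Lemma Bv_child : Bv u = Bv t.
Proof. by rewrite /Defs.Bv (join_bag_l tuw). Qed.

Lemma gamma_o_join (S : {set V}) : S \subset Lt t ->
  gamma_o t S = symd (symd (gamma_o u (S :&: Lt u)) (gamma_o w (S :&: Lt w)))
                     (gammaQ t (S :&: Bv t)).
Proof.
case: tuw => _ _ Vt_uw Vt_meet closed_u closed_w SL.
have S_uw : S = (S :&: Lt u) :|: (S :&: Lt w).
  by rewrite -setIUr -Lt_join; apply/esym/setIidPl.
have S_meet : (S :&: Lt u) :&: (S :&: Lt w) = S :&: Bv t by rewrite setIACA setIid Lt_meet.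
have nbrs_within (X : {set V}) c : (forall s, s \in S -> e s c -> s \in X) ->
    [set s in S :&: X | e s c] = [set s in S | e s c].
  move=> SX; apply/setP => s; rewrite !inE.
  by case: (boolP (s \in S)) => //= sS; case: (boolP (e s c)) => [/(SX _ sS) -> | ]; rewrite ?andbF.
have nbrs_in_Lt v c : closed_off_bag e par B t v -> c \in Vt v -> c \notin B t ->
    [set s in S :&: Lt v | e s c] = [set s in S | e s c].
  move=> closed_v cv cB; apply: nbrs_within => s sS esc; rewrite inE (closed_v c s cv cB esc).
  by move: (subsetP SL s sS); rewrite inE => /andP [].
apply/setP => c; rewrite !in_symd /Defs.gamma_o /Defs.gammaQ /Defs.Bc !inE.
case: (boolP (c \in B t)) => cB /=.
  have /setIP [cu cw] : c \in Vt u :&: Vt w by rewrite Vt_meet.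
  rewrite Vt_uw inE cu cw /=; case: (isvar c) => //=.
  by rewrite {1}S_uw odd_card_setIdU S_meet.
rewrite addbF; case: (boolP (c \in Vt u)) => cu.
  have cw : c \notin Vt w by apply: contra cB => cw; rewrite -Vt_meet inE cu.
  by rewrite Vt_uw inE cu (negbTE cw) /= addbF nbrs_in_Lt.
case: (boolP (c \in Vt w)) => cw; last by rewrite Vt_uw inE (negbTE cu) (negbTE cw).
by rewrite Vt_uw inE cw orbT /= nbrs_in_Lt.
Qed.

Lemma gamma_o_half_sub (S : {set V}) : S \subset Lt t -> gamma_o t S \subset Bc t ->
  gamma_o u (S :&: Lt u) \subset Bc t.
Proof.
move=> SL GB; apply/subsetP => c cG; move: (cG); rewrite inE => /and3P [cu nv _].
rewrite inE nv andbT; apply: contraT => cB.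
have cw : c \notin Vt w by apply: contra cB => cw; rewrite -(join_Vt_meet tuw) inE cu.
have : c \in gamma_o t S.
  rewrite gamma_o_join // !in_symd cG [c \in gamma_o w _]inE (negbTE cw).
  by rewrite [c \in gammaQ _ _]inE inE (negbTE cB).
by move/(subsetP GB); rewrite inE (negbTE cB).
Qed.

Lemma ts_param_half (R Q S : {set V}) : ts_param t R Q S -> S :&: Lt u != set0 ->
  ts_param u (gamma_o u (S :&: Lt u)) Q (S :&: Lt u).
Proof.
case/and4P => _ _ /eqP SQ _ Su; apply/and4P; split; rewrite ?subsetIr //.
by rewrite Bv_child -setIA (setIidPr Bv_sub_Lt) SQ.
Qed.

Lemma gamma_o_child (S : {set V}) : S \subset Lt u -> S :&: Bv t = set0 ->
  gamma_o t S = gamma_o u S.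
Proof.
move=> Su SQ; have Sw : S :&: Lt w = set0 by rewrite -(setIidPl Su) -setIA Lt_meet.
rewrite gamma_o_join ?(subset_trans Su Lt_child_sub) //.
by rewrite Sw SQ gamma_o_set0 gammaQ_set0 !symd0 (setIidPl Su).
Qed.

Lemma ts_param_child (R S : {set V}) :
  ts_param u R set0 S = ts_param t R set0 S && (S :&: Lt w == set0).
Proof.
apply/idP/idP => [/and4P [Sn Su /eqP SQ /eqP SR] | /andP [/and4P [Sn SL /eqP SQ /eqP SR] /eqP Sw]].
  rewrite Bv_child in SQ.
  have Sw : S :&: Lt w = set0 by rewrite -(setIidPl Su) -setIA Lt_meet.
  apply/andP; split; last by rewrite Sw.
  by apply/and4P; split; rewrite ?SQ ?gamma_o_child ?SR ?(subset_trans Su Lt_child_sub).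
have Su : S \subset Lt u by rewrite -(setIidPl SL) Lt_join setIUr Sw setU0 subsetIr.
by apply/and4P; split; rewrite ?Bv_child ?SQ -?gamma_o_child ?SR.
Qed.

Lemma f_le_f_child (R : {set V}) : ole (f t R set0) (f u R set0).
Proof.
case: (f_attained u R set0) => [-> | [S T <-]]; first exact: ole_None.
by rewrite ts_param_child in T; case/andP: T => /f_le_card.
Qed.

End JoinChild.

Section JoinNode.
Variables (t t1 t2 : N).
Hypothesis tJ : subtree_join e par B t t1 t2.

Local Notation join_pair := (join_pair isvar e B t).
Local Notation join_val := (join_val isvar e par B t1 t2).
Local Notation Fjoin := (Fjoin isvar e par B t t1 t2).
Local Notation Gjoin := (Gjoin isvar e par B t t1 t2).

Lemma Fjoin_le (R Q R1 R2 : {set V}) : join_pair R Q R1 R2 -> ole (Fjoin R Q) (join_val Q R1 R2).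
Proof.
exact: (big_omin_le (fun p : {set V} * {set V} => join_val Q p.1 p.2) (i := (R1, R2))).
Qed.

Lemma Fjoin_attained (R Q : {set V}) : Fjoin R Q = None \/
  exists2 p : {set V} * {set V}, join_pair R Q p.1 p.2 & join_val Q p.1 p.2 = Fjoin R Q.
Proof. exact: big_omin_attained. Qed.

Definition crossing (S : {set V}) := (S :&: Lt t1 != set0) && (S :&: Lt t2 != set0).

Definition split_gamma (S : {set V}) := (gamma_o t1 (S :&: Lt t1), gamma_o t2 (S :&: Lt t2)).

Lemma ts_param_halves (R Q S : {set V}) : ts_param t R Q S ->
  (S :&: Lt t1) :|: (S :&: Lt t2) = S /\ (S :&: Lt t1) :&: (S :&: Lt t2) = Q.
Proof.
case/and4P => _ SL /eqP SQ _; split; first by rewrite -setIUr -(Lt_join tJ); apply/setIidPl.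
by rewrite setIACA setIid (Lt_meet tJ).
Qed.

Lemma card_halves (R Q S : {set V}) : ts_param t R Q S ->
  #|S| + #|Q| = #|S :&: Lt t1| + #|S :&: Lt t2|.
Proof. by case/ts_param_halves => U I; rewrite -[RHS]cardsUI U I. Qed.

Lemma ts_param_join_pair (R Q S : {set V}) : R \subset Bc t -> ts_param t R Q S ->
  join_pair R Q (split_gamma S).1 (split_gamma S).2.
Proof.
move=> RB /and4P [_ SL /eqP SQ /eqP SR]; rewrite -SR in RB; apply/and3P; split.
- exact: (gamma_o_half_sub tJ SL RB).
- exact: (gamma_o_half_sub (subtree_join_sym tJ) SL RB).
by rewrite -SR -SQ (gamma_o_join tJ SL).
Qed.

Lemma ts_param_merge (R Q R1 R2 S1 S2 : {set V}) :
  ts_param t1 R1 Q S1 -> ts_param t2 R2 Q S2 -> join_pair R Q R1 R2 ->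
  [/\ ts_param t R Q (S1 :|: S2), (S1 :|: S2) :&: Lt t1 = S1,
      (S1 :|: S2) :&: Lt t2 = S2 & S1 :&: S2 = Q].
Proof.
move=> /and4P [S1n L1 /eqP Q1 /eqP G1] /and4P [_ L2 /eqP Q2 /eqP G2] /and3P [_ _ /eqP hR].
rewrite (Bv_child tJ) in Q1; rewrite (Bv_child (subtree_join_sym tJ)) in Q2.
have S2_Lt1 : S2 :&: Lt t1 = Q by rewrite -(setIidPl L2) -setIA (setIC (Lt t2)) (Lt_meet tJ).
have S1_Lt2 : S1 :&: Lt t2 = Q by rewrite -(setIidPl L1) -setIA (Lt_meet tJ).
have QS1 : Q \subset S1 by rewrite -Q1 subsetIl.
have QS2 : Q \subset S2 by rewrite -Q2 subsetIl.
have U1 : (S1 :|: S2) :&: Lt t1 = S1 by rewrite setIUl (setIidPl L1) S2_Lt1; apply/setUidPl.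
have U2 : (S1 :|: S2) :&: Lt t2 = S2 by rewrite setIUl (setIidPl L2) S1_Lt2; apply/setUidPr.
have SL : S1 :|: S2 \subset Lt t by rewrite (Lt_join tJ) setUSS.
split=> //; last by rewrite -{1}(setIidPl L1) -setIA (setIC _ S2) S2_Lt1; apply/setIidPr.
apply/and4P; split=> //.
- by rewrite setU_eq0 negb_and S1n.
- by rewrite setIUl Q1 Q2 setUid.
by rewrite (gamma_o_join tJ SL) U1 U2 setIUl Q1 Q2 setUid G1 G2 hR.
Qed.

Lemma f_le_Fjoin (R Q : {set V}) : ole (f t R Q) (Fjoin R Q).
Proof.
case: (Fjoin_attained R Q) => [-> | [[R1 R2] /= jp <-]]; first exact: ole_None.
rewrite /Defs.join_val.
case E1: (f t1 R1 Q) => [a|]; last exact: ole_None.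
case E2: (f t2 R2 Q) => [b|]; last exact: ole_None.
have [[S1 T1 <-] [S2 T2 <-]] := (f_witness E1, f_witness E2).
have [T _ _ S12] := ts_param_merge T1 T2 jp.
by apply: ole_trans (f_le_card T) _; move: (cardsUI S1 S2); rewrite S12 /=; lia.
Qed.

Lemma join_val_le_card (R Q S : {set V}) : ts_param t R Q S -> crossing S ->
  ole (join_val Q (split_gamma S).1 (split_gamma S).2) (Some #|S|).
Proof.
move=> T /andP [S1n S2n]; rewrite /Defs.join_val /=.
have := f_le_card (ts_param_half tJ T S1n).
have := f_le_card (ts_param_half (subtree_join_sym tJ) T S2n).
case: (f t1 _ Q) => [a|] //; case: (f t2 _ Q) => [b|] //= hb ha.
by have := card_halves T; lia.
Qed.

Lemma Fjoin_le_crossing (R Q S : {set V}) : R \subset Bc t -> ts_param t R Q S -> crossing S ->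
  ole (Fjoin R Q) (Some #|S|).
Proof.
move=> RB T cS; apply: ole_trans (join_val_le_card T cS).
exact: Fjoin_le (ts_param_join_pair RB T).
Qed.

Definition crossing_opt (R Q S : {set V}) :=
  [&& ts_param t R Q S, crossing S & Some #|S| == f t R Q].

Lemma crossing_opt_Fjoin (R Q S : {set V}) : R \subset Bc t -> crossing_opt R Q S ->
  f t R Q = Fjoin R Q.
Proof.
move=> RB /and3P [T cS /eqP fS]; apply: ole_anti (f_le_Fjoin R Q) _.
by rewrite -fS; apply: Fjoin_le_crossing.
Qed.

Lemma crossing_opt_split (R Q S : {set V}) : R \subset Bc t -> crossing_opt R Q S ->
  join_pair R Q (split_gamma S).1 (split_gamma S).2 &&
  (join_val Q (split_gamma S).1 (split_gamma S).2 == Fjoin R Q).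
Proof.
move=> RB cS; have hF := crossing_opt_Fjoin RB cS; case/and3P: cS => T cS /eqP fS.
have jp := ts_param_join_pair RB T; rewrite jp andTb; apply/eqP/(ole_anti _ (Fjoin_le jp)).
by rewrite -hF -fS; exact: (join_val_le_card T cS).
Qed.

Lemma crossing_opt_halves (R Q S : {set V}) : R \subset Bc t -> crossing_opt R Q S ->
  [/\ ts_param t1 (split_gamma S).1 Q (S :&: Lt t1),
      Some #|S :&: Lt t1| == f t1 (split_gamma S).1 Q,
      ts_param t2 (split_gamma S).2 Q (S :&: Lt t2) &
      Some #|S :&: Lt t2| == f t2 (split_gamma S).2 Q].
Proof.
move=> RB cS; have hF := crossing_opt_Fjoin RB cS.
have /andP [_ /eqP jv] := crossing_opt_split RB cS.
case/and3P: cS => T /andP [S1n S2n] /eqP fS.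
have T1 := ts_param_half tJ T S1n; have T2 := ts_param_half (subtree_join_sym tJ) T S2n.
rewrite T1 T2; move: jv (f_le_card T1) (f_le_card T2) (card_halves T).
rewrite -hF -fS /Defs.join_val /=.
case E1: (f t1 _ Q) => [a|] //; case E2: (f t2 _ Q) => [b|] //= [ab] la lb hc.
by have := f_ge_cardQ E1; split=> //; apply/eqP; congr Some; lia.
Qed.

Lemma crossing_opt_merge (R Q R1 R2 S1 S2 : {set V}) :
  f t R Q = Fjoin R Q -> join_pair R Q R1 R2 -> join_val Q R1 R2 = Fjoin R Q ->
  ts_param t1 R1 Q S1 -> Some #|S1| = f t1 R1 Q ->
  ts_param t2 R2 Q S2 -> Some #|S2| = f t2 R2 Q ->
  [/\ crossing_opt R Q (S1 :|: S2), (S1 :|: S2) :&: Lt t1 = S1 & (S1 :|: S2) :&: Lt t2 = S2].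
Proof.
move=> hF jp jv T1 o1 T2 o2; have [T U1 U2 I] := ts_param_merge T1 T2 jp.
split=> //; apply/and3P; split=> //.
  by rewrite /crossing U1 U2; case/and4P: T1 => -> _ _ _; case/and4P: T2 => -> _ _ _.
rewrite hF -jv /Defs.join_val -o1 -o2 /=; apply/eqP; congr Some.
by move: (cardsUI S1 S2); rewrite I; lia.
Qed.

Lemma card_crossing_opt_fibre (R Q R1 R2 : {set V}) : R \subset Bc t ->
  f t R Q = Fjoin R Q -> join_pair R Q R1 R2 -> join_val Q R1 R2 = Fjoin R Q ->
  #|[set S | crossing_opt R Q S & split_gamma S == (R1, R2)]| = g t1 R1 Q * g t2 R2 Q.
Proof.
move=> RB hF jp jv; rewrite /Defs.g -cardsX.
set fibre := [set S | _ & _].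
have halves_inj : {in fibre &, injective (fun S : {set V} => (S :&: Lt t1, S :&: Lt t2))}.
  move=> S S'; rewrite !inE => /andP [/and3P [T _ _] _] /andP [/and3P [T' _ _] _] [h1 h2].
  by rewrite -(ts_param_halves T).1 -(ts_param_halves T').1 h1 h2.
rewrite -(card_in_imset halves_inj); apply: eq_card => -[X Y]; rewrite in_setX !inE.
apply/imsetP/andP => [[S] | [/andP [T1 /eqP o1] /andP [T2 /eqP o2]]].
  rewrite inE => /andP [cS /eqP sp] [-> ->].
  by have [] := crossing_opt_halves RB cS; rewrite sp /= => -> -> -> ->.
have [cS e1 e2] := crossing_opt_merge hF jp jv T1 o1 T2 o2.
exists (X :|: Y); last by rewrite e1 e2.
case/and4P: T1 => _ _ _ /eqP G1; case/and4P: T2 => _ _ _ /eqP G2.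
by rewrite inE cS /split_gamma e1 e2 G1 G2 eqxx.
Qed.

Lemma card_crossing_opt (R Q : {set V}) : R \subset Bc t ->
  #|[set S | crossing_opt R Q S]| = (f t R Q == Fjoin R Q) * Gjoin R Q.
Proof.
move=> RB; case: (eqVneq (f t R Q) (Fjoin R Q)) => [hF | hF]; last first.
  rewrite mul0n; apply/eqP; rewrite cards_eq0; apply/eqP/setP => S; rewrite !inE.
  by apply: contra_neqF hF => /(crossing_opt_Fjoin RB).
rewrite mul1n -sum1dep_card (partition_big split_gamma
  (fun p => join_pair R Q p.1 p.2 && (join_val Q p.1 p.2 == Fjoin R Q))); last first.
  by move=> S; apply: crossing_opt_split.
apply: eq_bigr => -[R1 R2] /andP [jp /eqP jv].
by rewrite sum1dep_card card_crossing_opt_fibre.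
Qed.

Lemma ts_param_crossing (R Q S : {set V}) : ts_param t R Q S -> Q != set0 -> crossing S.
Proof.
move=> T Q_ne; have [_ I] := ts_param_halves T.
by apply/andP; split; apply: contraNneq Q_ne => S0; rewrite -I S0 ?set0I ?setI0.
Qed.

Theorem join_node_nonempty (R Q : {set V}) : R \subset Bc t -> Q != set0 ->
  f t R Q = Fjoin R Q /\ g t R Q = Gjoin R Q.
Proof.
move=> RB Q_ne.
have hF : f t R Q = Fjoin R Q.
  apply: ole_anti (f_le_Fjoin R Q) _.
  case: (f_attained t R Q) => [-> | [S T <-]]; first exact: ole_None.
  exact: Fjoin_le_crossing RB T (ts_param_crossing T Q_ne).
split=> //; have := card_crossing_opt Q RB; rewrite hF eqxx mul1n => <-.
apply: eq_card => S; rewrite !inE /crossing_opt.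
by case T: (ts_param t R Q S); rewrite //= (ts_param_crossing T Q_ne).
Qed.

Lemma ts_param_set0_cases (R S : {set V}) :
  (ts_param t R set0 S && (Some #|S| == f t R set0) : nat) =
  crossing_opt R set0 S + (ts_param t1 R set0 S && (Some #|S| == f t R set0))
  + (ts_param t2 R set0 S && (Some #|S| == f t R set0)).
Proof.
rewrite /crossing_opt /crossing (ts_param_child tJ) (ts_param_child (subtree_join_sym tJ)).
case T: (ts_param t R set0 S) => //=.
have not_both : ~~ ((S :&: Lt t1 == set0) && (S :&: Lt t2 == set0)).
  by rewrite -setU_eq0 (ts_param_halves T).1; case/and4P: T.
by move: not_both; do 3 case: (_ == _).
Qed.

Theorem join_node_empty (R : {set V}) : R \subset Bc t ->
  f t R set0 = omin (Fjoin R set0) (omin (f t1 R set0) (f t2 R set0)) /\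
  g t R set0 = (f t R set0 == Fjoin R set0) * Gjoin R set0
     + (f t R set0 == f t1 R set0) * g t1 R set0
     + (f t R set0 == f t2 R set0) * g t2 R set0.
Proof.
move=> RB; have [le1 le2] := (f_le_f_child tJ R, f_le_f_child (subtree_join_sym tJ) R).
split.
  apply: ole_anti; first exact: ole_omin (f_le_Fjoin R set0) (ole_omin le1 le2).
  case: (f_attained t R set0) => [-> | [S T <-]]; first exact: ole_None.
  case S2: (S :&: Lt t2 == set0).
    have T1 : ts_param t1 R set0 S by rewrite (ts_param_child tJ) T S2.
    exact: ole_trans (ole_trans (ole_ominr _ _) (ole_ominl _ _)) (f_le_card T1).
  case S1: (S :&: Lt t1 == set0).
    have T2 : ts_param t2 R set0 S by rewrite (ts_param_child (subtree_join_sym tJ)) T S1.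
    exact: ole_trans (ole_trans (ole_ominr _ _) (ole_ominr _ _)) (f_le_card T2).
  by apply: ole_trans (ole_ominl _ _) (Fjoin_le_crossing RB T _); rewrite /crossing S1 S2.
rewrite -card_crossing_opt // -!card_ts_param_le // -!sum_nat_of_bool -!big_split /=.
by rewrite /Defs.g -sum_nat_of_bool; apply: eq_bigr => S _; apply: ts_param_set0_cases.
Qed.

End JoinNode.

End TrappingSets.

Theorem mainTheorem11 (V N : finType) (isvar : pred V) (e : rel V)
  (par : N -> N) (root : N) (B : N -> {set V}) (t t1 t2 : N) :
  tanner_graph isvar e ->
  nice_tree_decomposition e par root B ->
  children par root t = [set t1; t2] -> t1 != t2 ->
  B t = B t1 -> B t = B t2 ->
  forall R Q : {set V}, R \subset Bc isvar B t -> Q \subset Bv isvar B t ->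
  (Q != set0 ->
     f isvar e par B t R Q = Fjoin isvar e par B t t1 t2 R Q /\
     g isvar e par B t R Q = Gjoin isvar e par B t t1 t2 R Q) /\
  (Q = set0 ->
     f isvar e par B t R Q =
       omin (Fjoin isvar e par B t t1 t2 R Q)
            (omin (f isvar e par B t1 R Q) (f isvar e par B t2 R Q)) /\
     (f isvar e par B t R Q != None ->
       g isvar e par B t R Q =
         (f isvar e par B t R Q == Fjoin isvar e par B t t1 t2 R Q)
           * Gjoin isvar e par B t t1 t2 R Q
         + (f isvar e par B t R Q == f isvar e par B t1 R Q) * g isvar e par B t1 R Q
         + (f isvar e par B t R Q == f isvar e par B t2 R Q) * g isvar e par B t2 R Q)).
Proof.
move=> _ [[par_root reach_root] tdec _ _ _] t_children t1_ne_t2 Bt1 Bt2 R Q RB _.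
have tJ := join_node_subtree_join tdec par_root reach_root t_children t1_ne_t2 Bt1 Bt2.
split; first exact: (join_node_nonempty tJ RB).
by move=> ->; have [-> ->] := join_node_empty tJ RB.
Qed.
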